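(* There is an absolute constant $C$ such that the following holds. Let $m\geq2$ be a divisor of $n$ and let $X_{n/m}$ be the set of unordered partitions of $\{1,\dots,n\}$ into $n/m$ cells each of size $m$, with the natural action of $S_n$. If $\pi\in S_n$ has $c$ cycles, then the number of elements of $X_{n/m}$ fixed by $\pi$ is at most $m^{Cn}c^{(1-1/m)c}$. *)

From Stdlib Require Import Reals.
From mathcomp Require Import all_boot all_fingroup.
Set Implicit Arguments.
Unset Strict Implicit.
Unset Printing Implicit Defensive.

Definition is_mpartition (n m : nat) (P : {set {set 'I_n}}) : bool :=
  partition P [set: 'I_n] && [forall B in P, #|B| == m].

Definition part_act (n : nat) (pi : 'S_n) (P : {set {set 'I_n}}) :
  {set {set 'I_n}} := [set pi @: (B : {set 'I_n}) | B in P].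

Definition nfixed_mpart (n m : nat) (pi : 'S_n) : nat :=
  #|[set P : {set {set 'I_n}} | is_mpartition m P && (part_act pi P == P)]|.

(* number of cycles of pi (fixed points count as cycles of length 1) *)
Definition ncycles (n : nat) (pi : 'S_n) : nat := #|porbits pi|.

From Stdlib Require Import Reals Lra.
From mathcomp Require Import all_boot all_fingroup zify.
Set Implicit Arguments.
Unset Strict Implicit.
Unset Printing Implicit Defensive.

(* Let P be a partition into blocks of size m that is fixed by pi.  Since pi
   permutes the blocks, the cycles of pi meeting the block of x do not depend
   on the choice of x inside a cycle; this groups the c cycles into classes of
   at most m cycles each (one per point of a block), so there are at least c/m
   classes.  Pick a leader point in every class.  Then P is determined by the
   union S of the blocks of the leaders, the set I of cycles of the leaders and
   the map f sending every other cycle to the leader cycle of its class: the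
   blocks of P are the images under the powers of pi of the sets
   S ∩ (class of i), i in I.  Counting these codes gives at most
   2^n 2^c c^(c - ⌈c/m⌉) <= m^(2n) c^((1 - 1/m) c) fixed partitions. *)

Definition ceil_divn c m := (c + m.-1) %/ m.

Lemma leq_ceil_divn c m k : 0 < m -> (ceil_divn c m <= k) = (c <= m * k).
Proof. by move=> m_gt0; rewrite -ltnS ltn_divLR // mulSn; lia. Qed.

Lemma leq_wexp2r a b e : a <= b -> a ^ e <= b ^ e.
Proof. by move=> le_ab; case: e => // e; rewrite leq_exp2r. Qed.

Lemma card_dep_pairs (A B : finType) (D : {pred A}) (F : A -> {pred B}) :
  #|[set x : A * B | (x.1 \in D) && (x.2 \in F x.1)]| = \sum_(a in D) #|F a|.
Proof.
rewrite -sum1dep_card -(pair_big_dep (mem D) (fun a => mem (F a)) (fun _ _ => 1)).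
by apply: eq_bigr => a _; rewrite sum1_card.
Qed.

Definition code_leader (T : finType) (I : {set {set T}}) (f : {ffun {set T} -> {set T}})
    (o : {set T}) : {set T} :=
  if o \in I then o else f o.

Definition mpart_decode (T : finType) (s : {perm T}) (S : {set T}) (I : {set {set T}})
    (f : {ffun {set T} -> {set T}}) : {set {set T}} :=
  [set (t : {perm T}) @: [set y in S | code_leader I f (porbit s y) == i]
     | i in I, t in <[s]>%g].

Section InvariantPartition.
Local Open Scope group_scope.
Variables (T : finType) (s : {perm T}) (P : {set {set T}}).
Hypothesis P_partition : partition P [set: T].
Hypothesis P_invariant : {in P, forall B : {set T}, s @: B \in P}.

Let P_trivI : trivIset P. Proof. by case/and3P: P_partition. Qed.

Lemma pblock_in x : x \in pblock P x.
Proof. by rewrite mem_pblock (cover_partition P_partition) inE. Qed.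

Lemma pblock_in_partition x : pblock P x \in P.
Proof. by rewrite pblock_mem // (cover_partition P_partition) inE. Qed.

Lemma imset_expg_in t B : B \in P -> (s ^+ t) @: B \in P.
Proof.
elim: t B => [|t IHt] B PB.
  by rewrite (eq_imset (g := id)) ?imset_id // => x; rewrite perm1.
rewrite expgS (eq_imset (g := (s ^+ t) \o s)); last by move=> x; rewrite permM.
by rewrite imset_comp IHt ?P_invariant.
Qed.

Lemma pblock_expg t x : pblock P ((s ^+ t) x) = (s ^+ t) @: pblock P x.
Proof.
by apply: def_pblock; rewrite ?imset_expg_in ?imset_f ?pblock_in ?pblock_in_partition.
Qed.

Definition block_porbits x : {set {set T}} := porbit s @: pblock P x.

Lemma block_porbits_expg t x : block_porbits ((s ^+ t) x) = block_porbits x.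
Proof.
rewrite /block_porbits pblock_expg -imset_comp.
by apply: eq_imset => y; rewrite /= porbit_perm.
Qed.

Lemma mem_block_porbits x y :
  (porbit s y \in block_porbits x) = (block_porbits y == block_porbits x).
Proof.
apply/idP/eqP => [/imsetP[z zPx /eqP] | <-]; last exact/imset_f/pblock_in.
rewrite eq_porbit_mem => /porbitP[t ->].
by rewrite block_porbits_expg /block_porbits (same_pblock P_trivI zPx).
Qed.

Lemma block_porbits_porbit x y :
  porbit s x = porbit s y -> block_porbits x = block_porbits y.
Proof. by move=> exy; apply/eqP; rewrite -mem_block_porbits exy imset_f ?pblock_in. Qed.

Definition leader x : T := odflt x [pick y | block_porbits y == block_porbits x].

Lemma block_porbits_leader x : block_porbits (leader x) = block_porbits x.
Proof. by rewrite /leader; case: pickP => [y /eqP | ] //=. Qed.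

Lemma eq_leader x y : (leader x == leader y) = (block_porbits x == block_porbits y).
Proof.
apply/eqP/eqP => [exy | exy].
  by rewrite -block_porbits_leader exy block_porbits_leader.
rewrite /leader (eq_pick (Q := fun z => block_porbits z == block_porbits y)).
  by case: pickP => // /(_ y); rewrite eqxx.
by move=> z; rewrite exy.
Qed.

Lemma leader_porbit_inj x y :
  porbit s (leader x) = porbit s (leader y) -> leader x = leader y.
Proof.
move/block_porbits_porbit; rewrite !block_porbits_leader => /eqP.
by rewrite -eq_leader => /eqP.
Qed.

Definition leader_porbits : {set {set T}} := [set porbit s (leader x) | x : T].

Definition leader_cover : {set T} := [set x | x \in pblock P (leader x)].

Definition porbit_leader (o : {set T}) : {set T} := \bigcup_(x in o) porbit s (leader x).

Lemma porbit_leaderE x : porbit_leader (porbit s x) = porbit s (leader x).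
Proof.
apply/eqP; rewrite eqEsubset (bigcup_max x) ?porbit_id // andbT.
apply/bigcupsP => y /porbitP[t ->].
by rewrite (eqP (_ : leader _ == leader x)) // eq_leader block_porbits_expg.
Qed.

Definition leader_map : {ffun {set T} -> {set T}} :=
  [ffun o => if o \in porbits s :\: leader_porbits then porbit_leader o else set0].

Lemma code_leader_porbit x :
  code_leader leader_porbits leader_map (porbit s x) = porbit s (leader x).
Proof.
rewrite /code_leader; case: ifP => [/imsetP[z _ exz] | xI].
  have /eqP <- : leader z == leader x.
    by rewrite eq_leader -block_porbits_leader (block_porbits_porbit exz).
  by rewrite exz.
by rewrite ffunE !inE xI imset_f ?inE // porbit_leaderE.
Qed.

Lemma leader_block x :
  [set y in leader_cover
     | code_leader leader_porbits leader_map (porbit s y) == porbit s (leader x)]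
  = pblock P (leader x).
Proof.
apply/setP => y; rewrite !inE code_leader_porbit.
apply/andP/idP => [[yPy /eqP/leader_porbit_inj <-] // | yPx].
have /eqP ->: leader y == leader x.
  by rewrite eq_leader -(block_porbits_leader x) /block_porbits (same_pblock P_trivI yPx).
by rewrite yPx.
Qed.

Lemma mpart_decodeK : mpart_decode s leader_cover leader_porbits leader_map = P.
Proof.
apply/setP => B; apply/idP/idP => [/imset2P[i t /imsetP[x _ ->] /cycleP[k ->] ->] | PB].
  by rewrite leader_block imset_expg_in ?pblock_in_partition.
have [y yB] : exists y, y \in B.
  by apply/set0Pn; apply: contraTneq PB => ->; case/and3P: P_partition.
have /imsetP[z zPy /esym/eqP] : porbit s (leader y) \in block_porbits y.
  by rewrite mem_block_porbits block_porbits_leader.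
rewrite eq_porbit_mem => /porbitP[k ez].
have -> : B = (s ^+ k) @: pblock P (leader y).
  by rewrite -pblock_expg -ez (same_pblock P_trivI zPy) (def_pblock P_trivI PB yB).
by rewrite -leader_block imset2_f ?imset_f ?mem_cycle.
Qed.

Lemma leader_porbits_sub : leader_porbits \subset porbits s.
Proof. by apply/subsetP => _ /imsetP[x _ ->]; apply: imset_f. Qed.

Lemma leader_map_on :
  leader_map \in pffun_on set0 (porbits s :\: leader_porbits) leader_porbits.
Proof.
apply/pffun_onP; split.
  by apply/subsetP => o; rewrite inE ffunE; case: ifP; rewrite ?eqxx.
move=> _ /imageP[o oD ->]; rewrite ffunE oD.
by case/setDP: oD => /imsetP[x _ ->] _; rewrite porbit_leaderE imset_f.
Qed.

Variable m : nat.
Hypothesis P_blocks : {in P, forall B : {set T}, #|B| = m}.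

Lemma card_porbits_leader : #|porbits s| <= m * #|leader_porbits|.
Proof.
rewrite -sum1_card (partition_big porbit_leader (mem leader_porbits)) /=; last first.
  by move=> _ /imsetP[x _ ->]; rewrite porbit_leaderE imset_f.
rewrite mulnC -sum_nat_const; apply: leq_sum => _ /imsetP[x _ ->].
rewrite sum1dep_card -(P_blocks (pblock_in_partition (leader x))).
apply: leq_trans (leq_imset_card (porbit s) _); apply: subset_leq_card.
apply/subsetP => o; rewrite inE => /andP[/imsetP[y _ ->] /eqP].
rewrite porbit_leaderE => /leader_porbit_inj eyx.
by rewrite mem_block_porbits -eyx block_porbits_leader.
Qed.

End InvariantPartition.

Section LeaderData.
Variables (T : finType) (O : {set {set T}}) (m : nat).

Definition leader_sets : {pred {set {set T}}} :=
  [pred I : {set {set T}} | (I \subset O) && (#|O| <= m * #|I|)].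

Definition leader_data : {set {set {set T}} * {ffun {set T} -> {set T}}} :=
  [set d : {set {set T}} * {ffun {set T} -> {set T}} |
     (d.1 \in leader_sets) && (d.2 \in pffun_on set0 (O :\: d.1) d.1)].

Lemma card_leader_data : 0 < m ->
  #|leader_data| <= 2 ^ #|O| * #|O| ^ (#|O| - ceil_divn #|O| m).
Proof.
move=> m_gt0; set c := #|O|.
rewrite (card_dep_pairs leader_sets (fun I => pffun_on set0 (O :\: I) I)).
apply: (@leq_trans (#|leader_sets| * c ^ (c - ceil_divn c m))); last first.
  rewrite -card_powerset leq_mul2r; apply/orP; right.
  by apply/subset_leq_card/subsetP => I /andP[IO _]; rewrite inE.
rewrite -sum_nat_const; apply: leq_sum => I /andP[IO cI]; rewrite card_pffun_on.
have I_le_c : #|I| <= c by apply: subset_leq_card.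
have -> : #|O :\: I| = c - #|I| by rewrite cardsD (setIidPr IO).
have [c0 | c_gt0] := posnP c; first by rewrite c0 !sub0n.
apply: leq_trans (leq_wexp2r _ I_le_c) _.
by apply: leq_pexp2l => //; rewrite leq_sub2l // leq_ceil_divn.
Qed.

End LeaderData.

Lemma card_invariant_mpartitions (T : finType) (s : {perm T}) (m : nat)
    (A : {set {set {set T}}}) :
    0 < m ->
    (forall P, P \in A -> [/\ partition P [set: T],
                               {in P, forall B : {set T}, #|B| = m}
                             & {in P, forall B : {set T}, s @: B \in P}]) ->
  #|A| <= 2 ^ #|T| * (2 ^ #|porbits s| *
                      #|porbits s| ^ (#|porbits s| - ceil_divn #|porbits s| m)).
Proof.
move=> m_gt0 A_inv.
pose code P := (leader_cover s P, (leader_porbits s P, leader_map s P)).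
have code_inj : {in A &, injective code}.
  move=> P Q /A_inv[Ppart _ Pinv] /A_inv[Qpart _ Qinv] [eS eI ef].
  by rewrite -(mpart_decodeK Ppart Pinv) -(mpart_decodeK Qpart Qinv) eS eI ef.
have code_sub : code @: A \subset setX [set: {set T}] (leader_data (porbits s) m).
  apply/subsetP => _ /imsetP[P /A_inv[Ppart Pblocks Pinv] ->].
  rewrite in_setX in_setT inE /=; apply/andP; split; last exact: leader_map_on.
  by rewrite inE leader_porbits_sub (card_porbits_leader Ppart Pinv Pblocks).
rewrite -[#|A|](card_in_imset code_inj) (leq_trans (subset_leq_card code_sub)) //.
by rewrite cardsX -powersetT card_powerset !cardsT leq_mul2l card_leader_data ?orbT.
Qed.

Local Open Scope R_scope.

Lemma INR_expn a b : INR (a ^ b) = INR a ^ b.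
Proof. by elim: b => // b IHb; rewrite expnS -multE mult_INR IHb. Qed.

Lemma Rpower_INR (a b : nat) : (0 < a)%N -> Rpower (INR a) (INR b) = INR (a ^ b).
Proof. by move=> a_gt0; rewrite INR_expn Rpower_pow //; apply/lt_0_INR/ltP. Qed.

(* Stdlib sets [ln 0 = 0]. *)
Lemma Rpower0l x : Rpower 0 x = 1.
Proof.
by rewrite /Rpower /ln; case: Rlt_dec => [/Rlt_irrefl | _] //; rewrite Rmult_0_r exp_0.
Qed.

Lemma INR_expn_le_Rpower (c q m : nat) : (0 < m)%N -> (q <= c)%N -> (c <= m * q)%N ->
  INR (c ^ (c - q)) <= Rpower (INR c) ((1 - 1 / INR m) * INR c).
Proof.
move=> m_gt0 q_le_c c_le_mq.
have [c0 | c_gt0] := posnP c.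
  by move: q_le_c; rewrite c0 leqn0 => /eqP ->; rewrite Rpower0l; apply: Rle_refl.
rewrite -Rpower_INR //; apply: Rle_Rpower; first by apply: (le_INR 1); apply/leP.
have m_pos : 0 < INR m by apply/lt_0_INR/ltP.
have /le_INR : (c <= m * q)%coq_nat by apply/leP.
rewrite minus_INR -?multE ?mult_INR; last by apply/leP.
move=> c_le_mq_R; apply: (Rmult_le_reg_l (INR m)) => //.
rewrite /Rdiv; field_simplify; lra.
Qed.

Theorem lemma4p4 :
  exists C : R, forall (n m : nat) (pi : 'S_n),
    (2 <= m)%N -> (m %| n)%N ->
    Rle (INR (nfixed_mpart m pi))
        (Rmult (Rpower (INR m) (Rmult C (INR n)))
               (Rpower (INR (ncycles pi))
                       (Rmult (Rminus 1 (Rdiv 1 (INR m))) (INR (ncycles pi))))).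
Proof.
exists 2 => n m pi m_ge2 _.
have m_gt0 : (0 < m)%N by apply: ltnW.
set c := ncycles pi; set q := ceil_divn c m.
have c_le_n : (c <= n)%N by rewrite -[n]card_ord leq_imset_card.
have fixed_le : (nfixed_mpart m pi <= 2 ^ n * 2 ^ c * c ^ (c - q))%N.
  rewrite -mulnA -{2}[n]card_ord; apply: card_invariant_mpartitions => // P.
  rewrite inE => /andP[/andP[Ppart /forallP Pm] /eqP Pfix].
  by split=> // B PB; [apply/eqP/(implyP (Pm B)) | rewrite -Pfix imset_f].
have two_pow_le : (2 ^ n * 2 ^ c <= m ^ (2 * n))%N.
  rewrite -expnD (@leq_trans (2 ^ (2 * n))) ?leq_wexp2r //.
  by rewrite leq_pexp2l // mul2n -addnn leq_add2l.
apply: Rle_trans (le_INR _ _ (elimT leP fixed_le)) _.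
rewrite -multE mult_INR; apply: Rmult_le_compat; try apply: pos_INR.
  apply: Rle_trans (le_INR _ _ (elimT leP two_pow_le)) _.
  by rewrite -Rpower_INR // -multE mult_INR; apply: Rle_refl.
apply: INR_expn_le_Rpower => //; first by rewrite leq_ceil_divn // leq_pmull.
by rewrite -leq_ceil_divn.
Qed.
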